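(* Let $p\in(0,\frac12)$ and $q=4p(1-p)$. Then $\eta_{KL}(Z(q))=\eta_{KL}(\mathrm{BSC}(p))=(1-2p)^2$, but $Z(q)\not\succeq_{\mathrm{l.n.}}\mathrm{BSC}(p)$.
   Context: For $q\in[0,1]$, the Z-channel $Z(q)$ has input and output alphabet $\{0,1\}$ with $Z(0|0)=1$, $Z(1|0)=0$, $Z(0|1)=q$, $Z(1|1)=1-q$. $\mathrm{BSC}(p)$ is the binary symmetric channel with crossover probability $p$. The KL contraction coefficient is $\eta_{KL}(P)=\sup_{P_X,Q_X}\frac{D(P\circ P_X\|P\circ Q_X)}{D(P_X\|Q_X)}$ (over inputs with $0<D(P_X\|Q_X)<\infty$, $P\circ P_X$ the output distribution). $P\succeq_{\mathrm{l.n.}}Q$ (less noisy) means $I(U:Y)\ge I(U:Y')$ for every finite-alphabet $U$ and every joint $P_{UX}$, with $U-X-Y$ and $U-X-Y'$ Markov chains. *)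

From mathcomp Require Import all_boot all_order all_algebra.
From mathcomp Require Import mathcomp_extra boolp classical_sets reals exp.
Set Implicit Arguments. Unset Strict Implicit. Unset Printing Implicit Defensive.
Import Order.TTheory GRing.Theory Num.Theory.
Local Open Scope ring_scope.
Local Open Scope classical_set_scope.

Section Info.
Variable R : realType.

Definition is_dist (T : finType) (P : T -> R) : Prop :=
  (forall x, 0 <= P x) /\ \sum_(x : T) P x = 1.

(* A channel W : X -> Y -> R, with W x y = W(y|x). *)
Definition chan (X Y : finType) := X -> Y -> R.

(* Binary alphabet {0,1} encoded as bool: 0 = false, 1 = true. *)
Definition Zch (q : R) : chan bool bool := fun x y =>
  if x then (if y then 1 - q else q) else (if y then 0 else 1).

Definition BSC (p : R) : chan bool bool := fun x y =>
  if x == y then 1 - p else p.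

Definition outd (X Y : finType) (W : chan X Y) (P : X -> R) : Y -> R :=
  fun y => \sum_(x : X) P x * W x y.

(* D(P||Q) < oo  iff  supp P is contained in supp Q. *)
Definition KL_finite (T : finType) (P Q : T -> R) : Prop :=
  forall x, 0 < P x -> 0 < Q x.

(* KL divergence (natural log; conventions 0 log 0 = 0); its value is
   meaningful when KL_finite P Q holds. *)
Definition KL (T : finType) (P Q : T -> R) : R :=
  \sum_(x : T | 0 < P x) P x * ln (P x / Q x).

Definition etaKL (X Y : finType) (W : chan X Y) : R :=
  sup [set r | exists (P Q : X -> R), [/\ is_dist P, is_dist Q,
          KL_finite P Q, 0 < KL P Q &
          r = KL (outd W P) (outd W Q) / KL P Q]].

(* Joint law of (U, Y) induced by P_UX and channel W (U - X - Y Markov). *)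
Definition joint (U X Y : finType) (W : chan X Y) (PUX : U * X -> R)
  : U * Y -> R := fun uy => \sum_(x : X) PUX (uy.1, x) * W x uy.2.

Definition margl (A B : finType) (J : A * B -> R) : A -> R :=
  fun a => \sum_(b : B) J (a, b).
Definition margr (A B : finType) (J : A * B -> R) : B -> R :=
  fun b => \sum_(a : A) J (a, b).

Definition MI (A B : finType) (J : A * B -> R) : R :=
  \sum_(ab : A * B | 0 < J ab)
     J ab * ln (J ab / (margl J ab.1 * margr J ab.2)).

Definition less_noisy (X Y Y' : finType) (W : chan X Y) (V : chan X Y') : Prop :=
  forall (U : finType) (PUX : U * X -> R), is_dist PUX ->
    MI (joint V PUX) <= MI (joint W PUX).

End Info.

From mathcomp Require Import all_boot all_order all_algebra.
From mathcomp Require Import mathcomp_extra boolp classical_sets reals exp.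
From mathcomp Require Import topology normedtype derive realfun.
From mathcomp Require Import ring lra.
Set Implicit Arguments. Unset Strict Implicit. Unset Printing Implicit Defensive.
Import Order.TTheory GRing.Theory Num.Theory.
Import numFieldNormedType.Exports.
Local Open Scope ring_scope.
Local Open Scope classical_set_scope.

(* Both channels act affinely on the input law: if a is the probability of
   input 1, the probability of output 1 is m a = al + be a, with
   (al, be) = (0, 1 - q) for Z(q) and (p, 1 - 2p) for BSC(p).  For fixed a the
   gap y |-> c d(a||y) - d(m a||m y) vanishes at y = a and has derivative
   (y - a) (c / (y (1 - y)) - be^2 / (m y (1 - m y))), so eta_KL is the least c
   with be^2 y (1 - y) <= c m y (1 - m y) on (0, 1).  The ratio of the two sides
   tends to 1 - q as y -> 0 for Z(q) and peaks at y = 1/2 for BSC(p), and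
   1 - q = (1 - 2p)^2.
   Against less-noisiness, take U = X with P(X = 0) = t: then I_Z <= -t ln q,
   while I_BSC >= t (1 - 2p) ln ((1 - m) / m) with m -> p as t -> 0, and the
   slopes at t = 0 differ by 2 d(p||1/2) > 0. *)

Section RealAnalysis.
Variable R : realType.
Implicit Types a b c x : R.

Lemma is_derive1_continuous (f : R -> R) x df :
  is_derive x (1 : R) f df -> {for x, continuous f}.
Proof. by case=> dx _; apply/differentiable_continuous/derivable1_diffP. Qed.

Lemma MVT_between (f df : R -> R) a b : a != b ->
  (forall x, (a < x < b) || (b < x < a) -> is_derive x (1 : R) f (df x)) ->
  (forall x, (a <= x <= b) || (b <= x <= a) -> {for x, continuous f}) ->
  exists2 c, (a < c < b) || (b < c < a) & f b - f a = df c * (b - a).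
Proof.
move=> ab df_oo f_cc.
have MVT_lt (u v : R) : u < v -> (forall x, u < x < v -> is_derive x (1 : R) f (df x)) ->
    (forall x, u <= x <= v -> {for x, continuous f}) ->
    exists2 c, u < c < v & f v - f u = df c * (v - u).
  move=> uv df_uv f_uv.
  have df_in x : x \in `]u, v[%R -> is_derive x (1 : R) f (df x).
    by rewrite in_itv /= => /df_uv.
  have f_within : {within `[u, v], continuous f}.
    by apply/continuous_in_subspaceT => x; rewrite inE /= in_itv /= => /f_uv.
  have [c cuv ->] := MVT uv df_in f_within.
  by exists c; move: cuv; rewrite in_itv.
case: ltgtP ab => // [a_lt_b | b_lt_a] _.
  have [c cab E] := MVT_lt a b a_lt_b (fun x xab => df_oo x (introT orP (or_introl xab)))
    (fun x xab => f_cc x (introT orP (or_introl xab))).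
  by exists c; rewrite ?cab.
have [c cba E] := MVT_lt b a b_lt_a (fun x xba => df_oo x (introT orP (or_intror xba)))
  (fun x xba => f_cc x (introT orP (or_intror xba))).
exists c; first by rewrite cba orbT.
by rewrite -opprB E -mulrN opprB.
Qed.

Lemma sup_eq_approx (S : set R) c :
  (forall r, S r -> r <= c) -> (forall e, 0 < e -> exists2 r, S r & c - e < r) ->
  sup S = c.
Proof.
move=> ub approx; have [r0 Sr0 _] := approx 1 ltr01.
apply/eqP; rewrite eq_le ge_sup //=; last by exists r0.
rewrite leNgt; apply/negP => sup_lt_c.
have [r Sr] := approx (c - sup S) ltac:(by rewrite subr_gt0).
have : r <= sup S by apply: ub_le_sup => //; exists c.
lra.
Qed.

End RealAnalysis.

Section LnInequalities.
Variable R : realType.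
Implicit Types u v : R.

Lemma ln_le_subr1 {u} : 0 < u -> ln u <= u - 1.
Proof. by move=> u0; have := @le_ln1Dx R (u - 1); rewrite addrCA subrr addr0; apply; lra. Qed.

Lemma ln_lt_subr1 {u} : 0 < u -> u != 1 -> ln u < u - 1.
Proof.
move=> u0 u1; have := @expR_gt1Dx R (ln u); rewrite lnK ?posrE // ln_eq0 // u1.
by move=> /(_ isT); lra.
Qed.

Lemma gibbs_le u v : 0 < u -> 0 < v -> u - v <= u * (ln u - ln v).
Proof.
move=> u0 v0; have := ln_le_subr1 (divr_gt0 v0 u0); rewrite ln_div ?posrE //.
rewrite -(ler_pM2l u0) !mulrBr mulrCA divff ?gt_eqF // !mulr1; lra.
Qed.

Lemma gibbs_lt u v : 0 < u -> 0 < v -> u != v -> u - v < u * (ln u - ln v).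
Proof.
move=> u0 v0 uv; have vu1 : v / u != 1.
  by apply: contra uv => /eqP /divr1_eq ->.
have := ln_lt_subr1 (divr_gt0 v0 u0) vu1; rewrite ln_div ?posrE //.
rewrite -(ltr_pM2l u0) !mulrBr mulrCA divff ?gt_eqF // !mulr1; lra.
Qed.

Lemma ln_odds_sub_le u v : 0 < u < 1 -> 0 < v < 1 ->
  (ln (1 - u) - ln u) - (ln (1 - v) - ln v) <= (v - u) / (u * (1 - v)).
Proof.
case/andP=> u0 u1 /andP[v0 v1]; have u1' : 0 < 1 - u by lra.
have v1' : 0 < 1 - v by lra.
have := @ln_le_subr1 ((1 - u) * v / (u * (1 - v))) ltac:(by rewrite !(divr_gt0, mulr_gt0)).
rewrite ln_div ?lnM ?posrE ?mulr_gt0 //.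
have -> : (1 - u) * v / (u * (1 - v)) - 1 = (v - u) / (u * (1 - v)).
  by field; rewrite !gt_eqF.
lra.
Qed.

End LnInequalities.

Section BinaryDivergence.
Variable R : realType.
Implicit Types a b x : R.

Definition xent a x : R := - (a * ln x + (1 - a) * ln (1 - x)).

Definition bdiv a b : R := xent a b - xent a a.

Lemma bdiv_id a : bdiv a a = 0.
Proof. exact: subrr. Qed.

Lemma is_derive_ln1B {x} : x < 1 ->
  is_derive x (1 : R) (fun y => ln (1 - y)) (- (1 - x)^-1).
Proof.
move=> x1; have x1' : 0 < 1 - x by rewrite subr_gt0.
have dB : is_derive x (1 : R) (fun y => 1 - y) (-1).
  by apply: trigger_derive; rewrite /GRing.scale /=; ring.
by have := @is_derive1_comp R (@ln R) (fun y => 1 - y) x _ _ (is_derive1_ln x1') dB; rewrite mulrN1.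
Qed.

Lemma is_derive_xent a {x} : 0 < x < 1 ->
  is_derive x (1 : R) (xent a) ((x - a) / (x * (1 - x))).
Proof.
case/andP => x0 x1; have d1 := is_derive1_ln x0; have d2 := is_derive_ln1B x1.
rewrite /xent; apply: trigger_derive; rewrite /GRing.scale /=.
by field; apply/andP; split; apply: lt0r_neq0; lra.
Qed.

Lemma xent_continuous a x : 0 <= a <= 1 -> (0 < x < 1) \/ x = a ->
  {for x, continuous (xent a)}.
Proof.
move=> /andP[a0 a1] [x01|->]; first exact: is_derive1_continuous (is_derive_xent a x01).
have [->|a_ne0] := eqVneq a 0.
  have -> : xent 0 = fun y => - ln (1 - y).
    by apply/funext => y; rewrite /xent !(mul0r, add0r, subr0, mul1r).
  exact/continuousN/is_derive1_continuous/(is_derive_ln1B (@ltr01 R)).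
have [->|a_ne1] := eqVneq a 1.
  have -> : xent 1 = fun y => - ln y.
    by apply/funext => y; rewrite /xent subrr !(mul0r, addr0, mul1r).
  exact/continuousN/continuous_ln.
apply: is_derive1_continuous (is_derive_xent a _).
by rewrite !lt_neqAle eq_sym a_ne0 a0 a_ne1 a1.
Qed.

Lemma bdivE a b : bdiv a b = a * (ln a - ln b) + (1 - a) * (ln (1 - a) - ln (1 - b)).
Proof. by rewrite /bdiv /xent; ring. Qed.

Lemma bdiv_gt0 a b : 0 < a < 1 -> 0 < b < 1 -> a != b -> 0 < bdiv a b.
Proof.
case/andP=> a0 a1 /andP[b0 b1] ab; rewrite bdivE.
have := @gibbs_lt R a b a0 b0 ab.
have := @gibbs_le R (1 - a) (1 - b) ltac:(lra) ltac:(lra).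
lra.
Qed.

Lemma bdiv_ge0 a b : 0 < a < 1 -> 0 < b < 1 -> 0 <= bdiv a b.
Proof.
move=> a01 b01; have [->|ab] := eqVneq a b; first by rewrite bdiv_id.
exact/ltW/bdiv_gt0.
Qed.

Definition bern a : bool -> R := fun y => if y then a else 1 - a.

Lemma is_dist_bern a : 0 <= a <= 1 -> is_dist (bern a).
Proof. by case/andP=> a0 a1; split; [case=> /=; lra | rewrite big_bool /=; ring]. Qed.

Lemma dist_boolE {P : bool -> R} : is_dist P -> P = bern (P true).
Proof.
by case=> _; rewrite big_bool /= => P1; apply/funext; case=> //=; lra.
Qed.

Lemma dist_bool_ge0_le1 {P : bool -> R} : is_dist P -> 0 <= P true <= 1.
Proof.
move=> dP; have := dP.1 true; have := dP.1 false; rewrite (dist_boolE dP) /=; lra.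
Qed.

Lemma KL_self (T : finType) (P : T -> R) : KL P P = 0.
Proof. by apply: big1 => x Px; rewrite divff ?gt_eqF // ln1 mulr0. Qed.

Lemma KL_bern a b : 0 <= a <= 1 -> 0 < b < 1 -> KL (bern a) (bern b) = bdiv a b.
Proof.
case/andP=> a0 a1 /andP[b0 b1].
have xlnx u v : 0 <= u -> 0 < v ->
    (if 0 < u then u * ln (u / v) else 0) = u * ln u - u * ln v.
  move=> u0 v0; case: ifPn => [u_gt0 | ]; first by rewrite ln_div ?posrE // mulrBr.
  rewrite -leNgt => u_le0; have -> : u = 0 by lra.
  by rewrite !mul0r subrr.
rewrite /KL big_mkcond big_bool /= !xlnx ?subr_ge0 ?subr_gt0 // /bdiv /xent.
ring.
Qed.

Lemma KL_gt0_bern_interior (P Q : bool -> R) : is_dist P -> is_dist Q ->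
  KL_finite P Q -> 0 < KL P Q -> 0 < Q true < 1.
Proof.
move=> dP dQ; rewrite (dist_boolE dP) (dist_boolE dQ) /=.
set a := P true; set b := Q true => PQ KL_gt0.
have /andP[a0 a1] : 0 <= a <= 1 := dist_bool_ge0_le1 dP.
have /andP[b0 b1] : 0 <= b <= 1 := dist_bool_ge0_le1 dQ.
have PQt := PQ true; have PQf := PQ false; rewrite /= !subr_gt0 in PQt PQf.
apply/andP; split; rewrite ltNge; apply/negP => b_le.
- have {}b0 : b = 0 by lra.
  have {}a0 : a = 0 by case: (ltP 0 a) => [/PQt|]; lra.
  by move: KL_gt0; rewrite a0 b0 KL_self ltxx.
- have {}b1 : b = 1 by lra.
  have {}a1 : a = 1 by case: (ltP a 1) => [/PQf|]; lra.
  by move: KL_gt0; rewrite a1 b1 KL_self ltxx.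
Qed.

End BinaryDivergence.

Section AffineBinaryChannel.
Variables (R : realType) (al be : R).
Hypotheses (al_ge0 : 0 <= al) (be_gt0 : 0 < be) (al_be_le1 : al + be <= 1).

Implicit Types a b c x y : R.

Local Notation m x := (al + be * x).

Lemma between_interior a b x : 0 <= a <= 1 -> 0 < b < 1 ->
  (a < x < b) || (b < x < a) -> 0 < x < 1.
Proof.
by case/andP=> a0 a1 /andP[b0 b1] /orP[] /andP[? ?]; apply/andP; split; lra.
Qed.

(* [lra] does not see section hypotheses, hence the local copies below. *)
Lemma affine_interior x : 0 < x < 1 -> 0 < m x < 1.
Proof.
move=> /andP[x0 x1]; have := al_ge0; have := be_gt0; have := al_be_le1.
by move=> *; apply/andP; split; nra.
Qed.

Lemma affine_unit x : 0 <= x <= 1 -> 0 <= m x <= 1.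
Proof.
move=> /andP[x0 x1]; have := al_ge0; have := be_gt0; have := al_be_le1.
by move=> *; apply/andP; split; nra.
Qed.

Definition gap c a y := c * bdiv a y - bdiv (m a) (m y).

Lemma is_derive_gap c a y : 0 < y < 1 -> is_derive y (1 : R) (gap c a)
  ((y - a) * (c / (y * (1 - y)) - be ^+ 2 / (m y * (1 - m y)))).
Proof.
move=> y01; have my01 := affine_interior y01.
have dm : is_derive y (1 : R) (fun x => m x) be.
  by apply: trigger_derive; rewrite /GRing.scale /=; ring.
have dx := is_derive_xent a y01.
have dmx := @is_derive1_comp R (xent (m a)) (fun x => m x) y _ _ (is_derive_xent (m a) my01) dm.
rewrite /gap /bdiv; apply: trigger_derive; rewrite /GRing.scale /=.
case/andP: y01 my01 => y0 y1 /andP[my0 my1].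
by field; rewrite !lt0r_neq0 //; lra.
Qed.

Lemma gap_continuous c a y : 0 <= a <= 1 -> 0 < y < 1 \/ y = a ->
  {for y, continuous (gap c a)}.
Proof.
move=> a01 y01a.
have cx := xent_continuous a01 y01a.
have cm : {for y, continuous (fun x => m x)}.
  by apply: (@is_derive1_continuous _ _ _ be); apply: trigger_derive; rewrite /GRing.scale /=; ring.
have cxm : {for y, continuous (xent (m a) \o (fun x => m x))}.
  apply: continuous_comp => //; apply: xent_continuous; first exact: affine_unit.
  by case: y01a => [/affine_interior|->]; [left|right].
rewrite /gap /bdiv.
by apply: cvgB; [apply: cvgM; [exact: cvg_cst | apply: cvgB] | apply: cvgB];
  rewrite //; exact: cvg_cst.
Qed.

Lemma gap_mvt c a b : 0 <= a <= 1 -> 0 < b < 1 -> a != b ->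
  exists2 x, (a < x < b) || (b < x < a) & exists2 k, 0 < k &
    gap c a b = k * (c * (m x * (1 - m x)) - be ^+ 2 * (x * (1 - x))).
Proof.
move=> a01 b01 ab.
pose dgap y := (y - a) * (c / (y * (1 - y)) - be ^+ 2 / (m y * (1 - m y))).
have [x xab gapE] : exists2 x, (a < x < b) || (b < x < a) &
    gap c a b - gap c a a = dgap x * (b - a).
  apply: (MVT_between ab) => y yab.
    exact/is_derive_gap/(between_interior a01 b01 yab).
  apply: gap_continuous => //; have [->|ya] := eqVneq y a; [by right | left].
  case/andP: a01 b01 => a0 a1 /andP[b0 b1]; move: ya; rewrite neq_lt.
  by case/orP=> ya; case/orP: yab => /andP[? ?]; apply/andP; split; lra.
have gap_a : gap c a a = 0 by rewrite /gap !bdiv_id mulr0 subr0.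
rewrite gap_a subr0 in gapE.
have x01 := between_interior a01 b01 xab.
have /andP[mx0 mx1] := affine_interior x01; case/andP: x01 => x0 x1.
have xab_gt0 : 0 < (x - a) * (b - a) by case/orP: xab => /andP[? ?]; nra.
exists x => //; exists ((x - a) * (b - a) / (x * (1 - x) * (m x * (1 - m x)))).
  by apply: divr_gt0 => //; apply: mulr_gt0; apply: mulr_gt0; lra.
by rewrite gapE /dgap; field; rewrite !lt0r_neq0 //; lra.
Qed.

Lemma bdiv_affine_le c a b : 0 <= a <= 1 -> 0 < b < 1 ->
  (forall x, 0 < x < 1 -> be ^+ 2 * (x * (1 - x)) <= c * (m x * (1 - m x))) ->
  bdiv (m a) (m b) <= c * bdiv a b.
Proof.
move=> a01 b01 hc; have [->|ab] := eqVneq a b; first by rewrite !bdiv_id mulr0.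
have [x xab [k k0 gapE]] := gap_mvt c a01 b01 ab.
rewrite -subr_ge0; move: gapE; rewrite /gap => ->.
by rewrite pmulr_rge0 // subr_ge0 hc // (between_interior a01 b01 xab).
Qed.

Lemma bdiv_affine_gt c a b : 0 < a -> a < b -> b < 1 ->
  (forall x, a < x < b -> c * (m x * (1 - m x)) < be ^+ 2 * (x * (1 - x))) ->
  c * bdiv a b < bdiv (m a) (m b).
Proof.
move=> a0 ab b1 hc; have a01 : 0 <= a <= 1 by apply/andP; split; lra.
have b01 : 0 < b < 1 by apply/andP; split; lra.
have [x xab [k k0 gapE]] := gap_mvt c a01 b01 (negbT (lt_eqF ab)).
have {}xab : a < x < b by case/orP: xab => // /andP[? ?]; lra.
rewrite -subr_lt0; move: gapE; rewrite /gap => ->.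
by rewrite pmulr_rlt0 // subr_lt0 hc.
Qed.

Lemma etaKL_affine (W : chan R bool bool) c :
  (forall a, outd W (bern a) = bern (m a)) ->
  (forall x, 0 < x < 1 -> be ^+ 2 * (x * (1 - x)) <= c * (m x * (1 - m x))) ->
  (forall e, 0 < e -> exists a b, [/\ 0 < a, a < b, b < 1 &
     forall x, a < x < b -> (c - e) * (m x * (1 - m x)) < be ^+ 2 * (x * (1 - x))]) ->
  etaKL W = c.
Proof.
move=> W_bern hup hlow; apply: sup_eq_approx.
  move=> _ [P [Q [dP dQ PQ KL_gt0 ->]]].
  have b01 := KL_gt0_bern_interior dP dQ PQ KL_gt0.
  have a01 := dist_bool_ge0_le1 dP.
  rewrite (dist_boolE dP) (dist_boolE dQ) !W_bern in KL_gt0 *.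
  have ma01 := affine_unit a01; have mb01 := affine_interior b01.
  rewrite !KL_bern // in KL_gt0 *.
  by rewrite ler_pdivrMr //; apply: bdiv_affine_le.
move=> e e0; have [a [b [a0 ab b1 hx]]] := hlow e e0.
have a01 : 0 < a < 1 by apply/andP; split; lra.
have a01w : 0 <= a <= 1 by apply/andP; split; lra.
have b01 : 0 < b < 1 by apply/andP; split; lra.
have b01w : 0 <= b <= 1 by apply/andP; split; lra.
have Dab_gt0 : 0 < bdiv a b := bdiv_gt0 a01 b01 (negbT (lt_eqF ab)).
have ma01 := affine_unit a01w; have mb01 := affine_interior b01.
exists (bdiv (m a) (m b) / bdiv a b).
  exists (bern a), (bern b).
  split; [exact: is_dist_bern | exact: is_dist_bern | by case=> /=; lra | |].
    by rewrite KL_bern.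
  by rewrite !W_bern !KL_bern.
by rewrite ltr_pdivlMr //; apply: bdiv_affine_gt.
Qed.

End AffineBinaryChannel.

Section Channels.
Variable R : realType.
Implicit Types a p q x : R.

Lemma outd_Zch_bern q a : outd (Zch q) (bern a) = bern ((1 - q) * a).
Proof. by apply/funext; case; rewrite /outd big_bool /Zch /bern /=; ring. Qed.

Lemma outd_BSC_bern p a : outd (BSC p) (bern a) = bern (p + (1 - 2 * p) * a).
Proof. by apply/funext; case; rewrite /outd big_bool /BSC /bern /=; ring. Qed.

Lemma etaKL_Zch q : 0 <= q < 1 -> etaKL (Zch q) = 1 - q.
Proof.
case/andP=> q0 q1; have s0 : 0 < 1 - q by lra.
apply: (@etaKL_affine _ 0 (1 - q)) => //; first by lra.
- by move=> a; rewrite add0r; exact: outd_Zch_bern.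
- move=> x _; rewrite add0r -subr_ge0.
  have -> : (1 - q) * ((1 - q) * x * (1 - (1 - q) * x)) - (1 - q) ^+ 2 * (x * (1 - x))
      = q * ((1 - q) * x) ^+ 2 by ring.
  by rewrite mulr_ge0 ?sqr_ge0.
move=> e e0; pose b := e / (2 * (1 + e)).
have b_gt0 : 0 < b by rewrite divr_gt0 //; lra.
have b_1e : b * (1 + e) = e / 2 by rewrite /b; field; lra.
exists (b / 2), b; split; [lra | lra | | ].
  by rewrite /b ltr_pdivrMr; lra.
move=> x /andP[xa xb]; rewrite add0r -subr_gt0.
have -> : (1 - q) ^+ 2 * (x * (1 - x)) - (1 - q - e) * ((1 - q) * x * (1 - (1 - q) * x))
    = (1 - q) * x * (e - x * ((1 - q) * (q + e))) by ring.
have x0 : 0 < x by lra.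
have slope : (1 - q) * (q + e) <= 1 + e by nra.
have : x * ((1 - q) * (q + e)) <= x * (1 + e) by rewrite ler_pM2l.
have : x * (1 + e) < b * (1 + e) by rewrite ltr_pM2r; lra.
by move=> *; rewrite !mulr_gt0 //; lra.
Qed.

Lemma etaKL_BSC p : 0 <= p < 1 / 2 -> etaKL (BSC p) = (1 - 2 * p) ^+ 2.
Proof.
case/andP=> p0 p1; have th0 : 0 < 1 - 2 * p by lra.
have th1 : (1 - 2 * p) ^+ 2 <= 1 by rewrite expr2; nra.
apply: (@etaKL_affine _ p (1 - 2 * p)) => //; first by lra.
- exact: outd_BSC_bern.
- move=> x _; rewrite -subr_ge0.
  have -> : (1 - 2 * p) ^+ 2 * ((p + (1 - 2 * p) * x) * (1 - (p + (1 - 2 * p) * x)))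
      - (1 - 2 * p) ^+ 2 * (x * (1 - x))
      = (1 - 2 * p) ^+ 2 * (1 - (1 - 2 * p) ^+ 2) * (x - 1 / 2) ^+ 2 by field.
  by rewrite mulr_ge0 ?sqr_ge0 // mulr_ge0 ?sqr_ge0 // subr_ge0.
move=> e e0; pose d := e / (4 * (1 + e)).
have d_gt0 : 0 < d by rewrite divr_gt0 //; lra.
have d_1e : d * (1 + e) = e / 4 by rewrite /d; field; lra.
have d_lt : d < 1 / 4 by rewrite /d ltr_pdivrMr; lra.
exists (1 / 2), (1 / 2 + d); split; [lra | lra | lra |].
move=> x /andP[xa xb]; rewrite -subr_gt0.
have -> : (1 - 2 * p) ^+ 2 * (x * (1 - x)) - ((1 - 2 * p) ^+ 2 - e)
      * ((p + (1 - 2 * p) * x) * (1 - (p + (1 - 2 * p) * x)))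
    = e / 4 - (x - 1 / 2) ^+ 2 * ((1 - 2 * p) ^+ 2 * (1 - (1 - 2 * p) ^+ 2 + e)) by field.
have z2_lt : (x - 1 / 2) ^+ 2 < d * d by rewrite expr2; nra.
have t_le : (1 - 2 * p) ^+ 2 * (1 - (1 - 2 * p) ^+ 2 + e) <= 1 + e.
  by have := sqr_ge0 (1 - 2 * p); nra.
have : (x - 1 / 2) ^+ 2 * ((1 - 2 * p) ^+ 2 * (1 - (1 - 2 * p) ^+ 2 + e))
    <= (x - 1 / 2) ^+ 2 * (1 + e) by rewrite ler_wpM2l ?sqr_ge0.
have : (x - 1 / 2) ^+ 2 * (1 + e) <= d * d * (1 + e) by rewrite ler_wpM2r; lra.
nra.
Qed.

End Channels.

Section NotLessNoisy.
Variable R : realType.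
Implicit Types p q t : R.

Lemma sum_bool_pair (F : bool * bool -> R) :
  \sum_(ab : bool * bool) F ab =
  F (true, true) + F (true, false) + (F (false, true) + F (false, false)).
Proof.
rewrite (eq_bigr (fun ab => F (ab.1, ab.2))); last by case.
by rewrite -(pair_bigA _ (fun i j => F (i, j))) !big_bool.
Qed.

Definition diag_input t : bool * bool -> R :=
  fun ux => if ux.1 == ux.2 then (if ux.1 then 1 - t else t) else 0.

Lemma is_dist_diag_input t : 0 < t < 1 -> is_dist (diag_input t).
Proof.
case/andP=> t0 t1; split; first by case=> [[] []] /=; rewrite /diag_input /=; lra.
by rewrite sum_bool_pair /diag_input /=; ring.
Qed.

Lemma MI_Zch_diag q t : 0 < q < 1 -> 0 < t < 1 ->
  MI (joint (Zch q) (diag_input t)) = - t * ln q - bdiv (t + (1 - t) * q) q.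
Proof.
case/andP=> q0 q1 /andP[t0 t1]; have t1' : 0 < 1 - t by lra.
have q1' : 0 < 1 - q by lra.
set c := t + (1 - t) * q; have c0 : 0 < c by rewrite /c; nra.
rewrite /MI big_mkcond sum_bool_pair /margl /margr /joint /diag_input /Zch /= !big_bool /=.
rewrite !(mul0r, mulr0, addr0, add0r, mulr1) ltxx ?addr0 ?add0r !mulr_gt0 // t0.
have -> : (1 - t) * (1 - q) / (((1 - t) * (1 - q) + (1 - t) * q) * ((1 - t) * (1 - q)))
    = (1 - t)^-1 by field; rewrite !gt_eqF.
have -> : (1 - t) * q / (((1 - t) * (1 - q) + (1 - t) * q) * ((1 - t) * q + t)) = q / c.
  by rewrite /c; field; rewrite !gt_eqF //; lra.
have -> : t / (t * ((1 - t) * q + t)) = c^-1 by rewrite /c; field; rewrite !gt_eqF //; lra.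
rewrite /bdiv /xent; have -> : 1 - c = (1 - t) * (1 - q) by rewrite /c; ring.
rewrite !lnV ?ln_div ?lnM ?posrE //.
by rewrite /c; ring.
Qed.

Lemma MI_BSC_diag p t : 0 < p < 1 -> 0 < t < 1 ->
  MI (joint (BSC p) (diag_input t)) =
    t * (1 - 2 * p) * (ln (1 - (p + (1 - 2 * p) * t)) - ln (p + (1 - 2 * p) * t))
    + bdiv p (p + (1 - 2 * p) * t).
Proof.
case/andP=> p0 p1 /andP[t0 t1]; have t1' : 0 < 1 - t by lra.
have p1' : 0 < 1 - p by lra.
set m := p + (1 - 2 * p) * t.
have m0 : 0 < m by rewrite /m; nra.
have m1 : 0 < 1 - m by rewrite /m; nra.
rewrite /MI big_mkcond sum_bool_pair /margl /margr /joint /diag_input /BSC /= !big_bool /=.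
rewrite !(mul0r, mulr0, addr0, add0r, mulr1) !mulr_gt0 //.
have -> : (1 - t) * (1 - p) + (1 - t) * p = 1 - t by ring.
have -> : t * p + t * (1 - p) = t by ring.
have -> : (1 - t) * (1 - p) + t * p = 1 - m by rewrite /m; ring.
have -> : (1 - t) * p + t * (1 - p) = m by rewrite /m; ring.
rewrite /bdiv /xent !ln_div ?lnM ?posrE ?mulr_gt0 //.
by rewrite /m; ring.
Qed.

Lemma bdiv_half p : 0 < p < 1 ->
  (1 - 2 * p) * (ln (1 - p) - ln p) + ln (4 * p * (1 - p)) = 2 * bdiv p (1 / 2).
Proof.
case/andP=> p0 p1; have p1' : 0 < 1 - p by lra.
have ln_half : ln (1 / 2 : R) = - ln 2 by rewrite div1r lnV ?posrE.
have ln4 : ln (4 : R) = 2 * ln 2 by rewrite (_ : 4 = 2 * 2) ?lnM ?posrE //; ring.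
have lnq : ln (4 * p * (1 - p)) = ln 4 + ln p + ln (1 - p).
  by rewrite !lnM ?posrE ?mulr_gt0.
rewrite /bdiv /xent (_ : 1 - 1 / 2 = 1 / 2); last by field.
by rewrite lnq ln4 ln_half; ring.
Qed.

Lemma BSC_log_odds_ge p t : 0 < p < 1 / 2 -> 0 < t < 1 / 2 ->
  (1 - 2 * p) * (ln (1 - p) - ln p) - 2 * t / p
  <= (1 - 2 * p) * (ln (1 - (p + (1 - 2 * p) * t)) - ln (p + (1 - 2 * p) * t)).
Proof.
case/andP=> p0 p1 /andP[t0 t1]; set th := 1 - 2 * p; set m := p + th * t.
have p01 : 0 < p < 1 by apply/andP; split; lra.
have m01 : 0 < m < 1 by rewrite /m /th; apply/andP; split; nra.
have m1 : 1 / 2 <= 1 - m by rewrite /m /th; nra.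
have odds := ln_odds_sub_le p01 m01.
have step : th * ((m - p) / (p * (1 - m))) <= 2 * t / p.
  rewrite (_ : m - p = th * t); last by rewrite /m; ring.
  rewrite mulrA ler_pdivrMr; last by apply: mulr_gt0; lra.
  rewrite (_ : 2 * t / p * (p * (1 - m)) = 2 * t * (1 - m)); last by field; lra.
  have th01 : 0 < th <= 1 by rewrite /th; apply/andP; split; lra.
  case/andP: th01 => th0 th1; have : th * th <= 1 by nra.
  nra.
have : th * ((ln (1 - p) - ln p) - (ln (1 - m) - ln m)) <= th * ((m - p) / (p * (1 - m))).
  by rewrite ler_wpM2l // /th; lra.
lra.
Qed.

Lemma MI_Zch_lt_MI_BSC p t : 0 < p < 1 / 2 -> 0 < t < 1 / 2 -> t < p * bdiv p (1 / 2) ->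
  MI (joint (Zch (4 * p * (1 - p))) (diag_input t)) < MI (joint (BSC p) (diag_input t)).
Proof.
move=> p01 t01 t_lt; case/andP: (p01) (t01) => p0 p1 /andP[t0 t1].
set q := 4 * p * (1 - p); set m := p + (1 - 2 * p) * t.
have q01 : 0 < q < 1 by rewrite /q; apply/andP; split; nra.
have t01' : 0 < t < 1 by apply/andP; split; lra.
have p01' : 0 < p < 1 by apply/andP; split; lra.
have m01 : 0 < m < 1 by rewrite /m; apply/andP; split; nra.
have c01 : 0 < t + (1 - t) * q < 1 by case/andP: q01 => *; apply/andP; split; nra.
rewrite MI_Zch_diag // MI_BSC_diag // -/m.
have := bdiv_ge0 p01' m01; have := bdiv_ge0 c01 q01.
have := BSC_log_odds_ge p01 t01; rewrite -/m.
have := bdiv_half p01'; rewrite -/q.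
have : 2 * t / p < 2 * bdiv p (1 / 2) by rewrite ltr_pdivrMr //; lra.
move=> slope_gt half odds D1 D2.
suff : 0 < t * ((1 - 2 * p) * (ln (1 - m) - ln m) + ln q) by lra.
by rewrite pmulr_rgt0 //; lra.
Qed.

Theorem Zch_not_less_noisy_BSC p : 0 < p < 1 / 2 ->
  ~ less_noisy (Zch (4 * p * (1 - p))) (BSC p).
Proof.
move=> p01 less_noisy_ZB; case/andP: (p01) => p0 p1.
set d := bdiv p (1 / 2).
have d_gt0 : 0 < d by rewrite bdiv_gt0 ?lt_eqF //; apply/andP; split; lra.
pose t := p * d / (2 * (1 + d)).
have t_gt0 : 0 < t by apply: divr_gt0; [exact: mulr_gt0 | lra].
have t2 : t * (2 * (1 + d)) = p * d by rewrite /t; field; lra.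
have t01 : 0 < t < 1 / 2 by apply/andP; split; nra.
have t_lt : t < p * d by rewrite -t2 ltr_pMr //; lra.
have dist_t : is_dist (diag_input t) by apply: is_dist_diag_input; apply/andP; split; lra.
have := less_noisy_ZB bool (diag_input t) dist_t.
by rewrite leNgt (MI_Zch_lt_MI_BSC p01 t01 t_lt).
Qed.

End NotLessNoisy.

Theorem mainTheorem9 (R : realType) (p : R) :
  0 < p -> p < 1 / 2 ->
  [/\ etaKL (Zch (4 * p * (1 - p))) = (1 - 2 * p) ^+ 2,
      etaKL (BSC p) = (1 - 2 * p) ^+ 2 &
      ~ less_noisy (Zch (4 * p * (1 - p))) (BSC p)].
Proof.
move=> p0 p1; split.
- by rewrite etaKL_Zch; [ring | apply/andP; split; nra].
- by apply: etaKL_BSC; apply/andP; split; lra.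
- by apply: Zch_not_less_noisy_BSC; apply/andP; split.
Qed.
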